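(* Let $G=\langle a_1,a_2,\dots,a_n\rangle$ be a finite semi-3-abelian 3-group with $|G/\Phi(G)|=3^{n}$. Then $\Omega_{1}(G)\le Z_{n+1}(G)$. Moreover, if $x=a_i^{m}\in\Omega_{1}(G)$ for some $1\le i\le n$ and some positive integer $m$, then $x\in Z_{n}(G)$.
   Context: A finite 3-group $G$ is semi-3-abelian if for all $a,b\in G$: $(ab)^{3}=1$ if and only if $a^{3}b^{3}=1$. $\Omega_{1}(G)=\langle g\in G : g^{3}=1\rangle$. $\Phi(G)$ is the Frattini subgroup and $Z_k(G)$ is the $k$-th term of the upper central series ($Z_0=1$, $Z_{k+1}/Z_k=Z(G/Z_k)$). *)

From mathcomp Require Import all_boot all_fingroup all_solvable.
Set Implicit Arguments. Unset Strict Implicit. Unset Printing Implicit Defensive.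
Local Open Scope group_scope.

Definition semi3abelian (gT : finGroupType) (G : {set gT}) : Prop :=
  forall a b, a \in G -> b \in G -> ((a * b) ^+ 3 == 1) = (a ^+ 3 * b ^+ 3 == 1).

Definition Omega1_3 (gT : finGroupType) (G : {set gT}) : {set gT} :=
  <<[set g in G | g ^+ 3 == 1]>>.

(* For x of order 3, semi-3-abelianity makes the normal closure N of x an
   abelian group of exponent 3 with [w, g, g] = 1 for w in N and g in G.
   Then, as soon as all left-normed commutators [v, h_1, ..., h_(m+1)] with
   v in N vanish, [v, h_1, ..., h_m] is multiplicative in each h_j and
   alternating.  A weight-(n+1) commutator in the n generators repeats a
   generator and so vanishes; by descending induction from the nilpotency
   class of G, [N, G, ..., G] (n + 1 times) = 1.  If moreover x commutes
   with a_i, a weight-n commutator in the generators either involves a_i,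
   which can be moved next to x, or repeats a generator. *)

From mathcomp Require Import all_boot all_fingroup all_solvable.
Set Implicit Arguments. Unset Strict Implicit. Unset Printing Implicit Defensive.
Local Open Scope group_scope.

Section IteratedCommutator.

Variable gT : finGroupType.
Implicit Types (G : {group gT}) (v : gT) (hs : seq gT).

Definition commgs v hs := foldl (fun w h => [~ w, h]) v hs.

Lemma commgs_cons v h hs : commgs v (h :: hs) = commgs [~ v, h] hs.
Proof. by []. Qed.

Lemma commgs_cat v hs1 hs2 : commgs v (hs1 ++ hs2) = commgs (commgs v hs1) hs2.
Proof. exact: foldl_cat. Qed.

Lemma commgs1 hs : commgs 1 hs = 1.
Proof. by elim: hs => //= h hs IHhs; rewrite comm1g. Qed.

Lemma commgs_ucn G k v hs :
  v \in 'Z_k(G) -> all [in G] hs -> k <= size hs -> commgs v hs = 1.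
Proof.
elim: hs k v => [|h hs IHhs] [|k] v //; rewrite ?ucn0 => Zv.
- by rewrite (set1P Zv).
- by rewrite (set1P Zv) commgs1.
rewrite commgs_cons => /andP[Gh Ghs] le_k_hs; rewrite (IHhs k) //.
move: Zv; rewrite ucnSnR inE => /andP[_ /subsetP]; apply.
by rewrite mem_commg ?set11.
Qed.

Lemma ucn_commgs G k v :
  v \in G -> (forall hs, all [in G] hs -> size hs = k -> commgs v hs = 1) ->
  v \in 'Z_k(G).
Proof.
elim: k v => [|k IHk] v Gv vanish.
  by rewrite ucn0 -[v]/(commgs v [::]) vanish ?set11.
rewrite ucnSnR inE Gv gen_subG; apply/subsetP=> _ /imset2P[_ h /set1P-> Gh ->].
rewrite IHk ?groupR // => hs Ghs size_hs.
by rewrite -commgs_cons vanish //= ?Gh ?size_hs.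
Qed.

End IteratedCommutator.

Arguments commgs : simpl never.

Lemma uniq_ord_size n (w : seq 'I_n) : uniq w -> size w <= n.
Proof. by move/card_uniqP <-; rewrite -[n in _ <= n]card_ord max_card. Qed.

Section EngelAbelianNormalSubgroup.

Variables (gT : finGroupType) (G N : {group gT}).
Variables (n : nat) (a : 'I_n -> gT).
Hypothesis genG : G :=: <<[set a i | i : 'I_n]>>.
Hypotheses (nilG : nilpotent G) (sNG : N \subset G) (nNG : G \subset 'N(N)).
Hypothesis abN : abelian N.
Hypothesis engelN : forall w g, w \in N -> g \in G -> [~ w, g, g] = 1.

Lemma mem_gen_elt i : a i \in G.
Proof. by rewrite genG mem_gen ?imset_f. Qed.

Lemma all_map_gen_elt (w : seq 'I_n) : all [in G] (map a w).
Proof. by apply/allP=> _ /mapP[i _ ->]; apply: mem_gen_elt. Qed.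

Lemma commg_memN v g : v \in N -> g \in G -> [~ v, g] \in N.
Proof. by move=> Nv Gg; rewrite commgEl groupM ?groupV ?memJ_norm ?(subsetP nNG). Qed.

Lemma commgs_memN v hs : v \in N -> all [in G] hs -> commgs v hs \in N.
Proof.
elim: hs v => //= h hs IHhs v Nv /andP[Gh Ghs].
by rewrite commgs_cons IHhs ?commg_memN.
Qed.

Lemma commgsMl u v hs : u \in N -> v \in N -> all [in G] hs ->
  commgs (u * v) hs = commgs u hs * commgs v hs.
Proof.
elim: hs u v => //= h hs IHhs u v Nu Nv /andP[Gh Ghs].
have fix_uh : [~ u, h] ^ v = [~ u, h].
  by apply/conjg_fixP/commgP; apply: (centsP abN); rewrite ?commg_memN.
by rewrite !commgs_cons commMgJ fix_uh IHhs ?commg_memN.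
Qed.

Lemma commgs_engel v pre g post :
  v \in N -> all [in G] pre -> g \in G -> commgs v (pre ++ g :: g :: post) = 1.
Proof. by move=> Nv Gpre Gg; rewrite commgs_cat !commgs_cons engelN ?commgs1 ?commgs_memN. Qed.

Definition commgs_vanish m :=
  forall v hs, v \in N -> all [in G] hs -> size hs = m -> commgs v hs = 1.

Section Multilinear.

Variable m : nat.
Hypothesis vanish : commgs_vanish m.+1.

Lemma commgsMr v pre g h post :
  v \in N -> all [in G] pre -> g \in G -> h \in G -> all [in G] post ->
  size (pre ++ g :: post) = m ->
  commgs v (pre ++ g * h :: post) =
    commgs v (pre ++ g :: post) * commgs v (pre ++ h :: post).
Proof.
move=> Nv Gpre Gg Gh Gpost size_m.
have Nw : commgs v pre \in N by apply: commgs_memN.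
rewrite !commgs_cat !commgs_cons; set w := commgs v pre in Nw *.
have Nwg := commg_memN Nw Gg; have Nwh := commg_memN Nw Gh.
have Nwgh := commg_memN Nwg Gh.
have split_wgh : [~ w, g] ^ h = [~ w, g] * [~ w, g, h].
  by rewrite [[~ _, g, h]]commgEl mulKVg.
have vanish_wgh : commgs [~ w, g, h] post = 1.
  have := vanish Nv (hs := pre ++ g :: h :: post).
  rewrite commgs_cat !commgs_cons -/w; apply.
    by rewrite all_cat /= Gpre Gg Gh Gpost.
  by rewrite -size_m !size_cat /= addnS.
rewrite commgMJ split_wgh (commgsMl Nwh (groupM Nwg Nwgh)) //.
rewrite (commgsMl Nwg Nwgh) // vanish_wgh mulg1.
by apply: (centsP abN); apply: commgs_memN.
Qed.

Lemma commgs_swap v pre g h post :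
  v \in N -> all [in G] pre -> g \in G -> h \in G -> all [in G] post ->
  (size pre + size post).+2 = m ->
  commgs v (pre ++ g :: h :: post) = (commgs v (pre ++ h :: g :: post))^-1.
Proof.
move=> Nv Gpre Gg Gh Gpost size_m.
pose phi x y := commgs v (pre ++ x :: y :: post).
have phiMl x y z : x \in G -> y \in G -> z \in G ->
    phi (x * y) z = phi x z * phi y z.
  move=> Gx Gy Gz; rewrite /phi commgsMr //= ?Gz //.
  by rewrite size_cat -size_m /= !addnS.
have phiMr x y z : x \in G -> y \in G -> z \in G ->
    phi x (y * z) = phi x y * phi x z.
  move=> Gx Gy Gz; rewrite /phi -!(cat_rcons x pre) commgsMr ?all_rcons ?Gx //.
  by rewrite size_cat size_rcons -size_m /= !addnS.
have phi_diag x : x \in G -> phi x x = 1 by move=> Gx; apply: commgs_engel.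
have Ggh : g * h \in G by rewrite groupM.
change (phi g h = (phi h g)^-1); rewrite -[LHS]invgK; congr _^-1.
apply: mulg1_eq; have := phi_diag _ Ggh.
by rewrite phiMl // !phiMr // !phi_diag // mulg1 mul1g.
Qed.

Lemma commgs_repeat v pre y mid post :
  v \in N -> all [in G] pre -> y \in G -> all [in G] mid -> all [in G] post ->
  size (pre ++ y :: mid ++ y :: post) = m ->
  commgs v (pre ++ y :: mid ++ y :: post) = 1.
Proof.
move=> Nv Gpre Gy; elim/last_ind: mid post => [|mid z IHmid] post.
  by move=> *; apply: commgs_engel.
rewrite all_rcons => /andP[Gz Gmid] Gpost size_m.
have Gymid : all [in G] (pre ++ y :: mid) by rewrite all_cat /= Gpre Gy Gmid.
rewrite cat_rcons -cat_cons catA commgs_swap //; last first.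
  by rewrite -size_m !size_cat /= !size_cat size_rcons /= !(addnS, addSn) -!addnA.
rewrite -catA cat_cons IHmid ?invg1 //= ?Gz //.
by rewrite -size_m !size_cat /= !size_cat size_rcons /= !(addnS, addSn).
Qed.

Lemma commgs_not_uniq v pre hs :
  v \in N -> all [in G] pre -> all [in G] hs -> ~~ uniq hs ->
  size (pre ++ hs) = m -> commgs v (pre ++ hs) = 1.
Proof.
move=> Nv; elim: hs pre => [|h hs IHhs] pre //= Gpre /andP[Gh Ghs].
have [hs_h _ | /= hs'h not_uniq_hs size_m] := boolP (h \in hs).
  case/splitPr: hs_h Ghs => p1 p2.
  by rewrite all_cat /= => /and3P[Gp1 _ Gp2]; apply: commgs_repeat.
by rewrite -cat_rcons IHhs ?all_rcons ?Gh // cat_rcons.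
Qed.

Lemma commgs_commute_front v y pre post :
  v \in N -> y \in G -> [~ v, y] = 1 -> all [in G] pre -> all [in G] post ->
  size (pre ++ y :: post) = m -> commgs v (pre ++ y :: post) = 1.
Proof.
move=> Nv Gy vy; elim/last_ind: pre post => [|pre z IHpre] post.
  by rewrite cat0s commgs_cons vy commgs1.
rewrite all_rcons cat_rcons => /andP[Gz Gpre] Gpost size_m.
have size_pre_post : (size pre + size post).+2 = m.
  by move: size_m; rewrite size_cat /= !addnS.
by rewrite commgs_swap // IHpre ?invg1 //= ?Gz // size_cat /= !addnS.
Qed.

Lemma commgs_gen v :
  v \in N -> (forall w : seq 'I_n, size w = m -> commgs v (map a w) = 1) ->
  forall hs, all [in G] hs -> size hs = m -> commgs v hs = 1.
Proof.
move=> Nv vanish_gen.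
suff vanish_pre pre post : all [in G] pre -> size (pre ++ map a post) = m ->
    commgs v (pre ++ map a post) = 1.
  by move=> hs Ghs size_hs; rewrite -[hs]cats0 (vanish_pre _ [::]) ?cats0.
elim/last_ind: pre post => [|pre h IHpre] post.
  by rewrite size_map => _; apply: vanish_gen.
rewrite all_rcons cat_rcons => /andP[Gh Gpre] size_m.
pose H := [set x in G | commgs v (pre ++ x :: map a post) == 1].
have groupH : group_set H.
  apply/group_setP; split.
    by rewrite inE group1 commgs_cat commgs_cons commg1 commgs1 /=.
  move=> x y; rewrite !inE => /andP[Gx /eqP vx] /andP[Gy /eqP vy].
  rewrite groupM // commgsMr ?vx ?vy ?mulg1 ?eqxx ?all_map_gen_elt //.
  by rewrite -size_m !size_cat.
have sGH : G \subset Group groupH.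
  rewrite {1}genG gen_subG; apply/subsetP=> _ /imsetP[i _ ->].
  rewrite inE mem_gen_elt; apply/eqP/(IHpre (i :: post)) => //.
  by move: size_m; rewrite !size_cat /=.
by have := subsetP sGH h Gh; rewrite inE Gh => /eqP.
Qed.

End Multilinear.

Lemma commgs_vanish_pred m : n < m -> commgs_vanish m.+1 -> commgs_vanish m.
Proof.
move=> lt_n_m vanish v hs Nv Ghs size_hs.
apply: (commgs_gen vanish Nv _ Ghs size_hs) => w size_w.
rewrite -[map a w]cat0s (commgs_not_uniq vanish) ?all_map_gen_elt ?size_map //.
by apply: contraTN lt_n_m => /map_uniq/uniq_ord_size; rewrite size_w -leqNgt.
Qed.

Lemma commgs_vanish_gt m : n < m -> commgs_vanish m.
Proof.
have [c Zc] := ucnP G nilG.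
suff vanish_ge t k : c <= k + t -> n < k -> commgs_vanish k.
  by apply: (vanish_ge c); rewrite leq_addl.
elim: t k => [|t IHt] k le_c_kt lt_n_k.
  move=> v hs Nv Ghs size_hs; apply: (@commgs_ucn _ G c) => //.
    by rewrite Zc (subsetP sNG).
  by rewrite size_hs -(addn0 k).
apply: (commgs_vanish_pred lt_n_k).
apply: IHt; [by rewrite addSnnS | exact: ltnW].
Qed.

Lemma sub_ucn_engel_abelian_normal : N \subset 'Z_n.+1(G).
Proof.
apply/subsetP=> v Nv; apply: ucn_commgs (subsetP sNG v Nv) _ => hs.
exact: commgs_vanish_gt (ltnSn n) v hs Nv.
Qed.

Lemma ucn_commute_gen_elt v i : v \in N -> [~ v, a i] = 1 -> v \in 'Z_n(G).
Proof.
move=> Nv vai; have vanish := commgs_vanish_gt (ltnSn n).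
apply: ucn_commgs (subsetP sNG v Nv) _.
apply: (commgs_gen vanish Nv) => w size_w.
have [w_i | w'i] := boolP (i \in w).
  case/splitPr: w_i size_w => p1 p2 size_w; rewrite map_cat /=.
  apply: (commgs_commute_front vanish); rewrite ?mem_gen_elt ?all_map_gen_elt //.
  by move: size_w; rewrite !size_cat /= !size_map.
rewrite -[map a w]cat0s (commgs_not_uniq vanish) ?all_map_gen_elt ?size_map //.
apply/negP=> /map_uniq uniq_w.
by have := @uniq_ord_size n (i :: w); rewrite /= w'i uniq_w size_w ltnn => /(_ isT).
Qed.

End EngelAbelianNormalSubgroup.

Section Semi3Abelian.

Variables (gT : finGroupType) (G : {group gT}).
Hypothesis semiG : semi3abelian G.

Lemma semi3abelian_cubeMl w h :
  w \in G -> w ^+ 3 = 1 -> h \in G -> (w * h) ^+ 3 = h ^+ 3.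
Proof.
move=> Gw w3 Gh; have := semiG (groupM Gw Gh) (groupVr Gh).
by rewrite mulgK w3 eqxx mulg_eq1 expgVn invgK => /esym/eqP.
Qed.

Lemma semi3abelian_mul_conj w g :
  w \in G -> w ^+ 3 = 1 -> g \in G -> w * w ^ g * w ^ (g * g) = 1.
Proof.
move=> Gw w3 Gg; have := semi3abelian_cubeMl Gw w3 (groupVr Gg).
rewrite !expgS expg0 !mulg1 => cube_wg.
have -> : w * w ^ g * w ^ (g * g) =
    (w * g^-1) * ((w * g^-1) * (w * g^-1)) * (g * g * g).
  by rewrite !conjgE !invMg !mulgA !(mulgK, mulgVK).
by rewrite cube_wg !mulgA !mulgVK mulVg.
Qed.

Lemma semi3abelian_commute_conj w g :
  w \in G -> w ^+ 3 = 1 -> g \in G -> commute w (w ^ g).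
Proof.
move=> Gw w3 Gg; have w_w : w ^ w = w by rewrite conjgE mulKg.
have := semi3abelian_mul_conj Gw w3 (groupM Gw Gg).
rewrite !conjgM w_w -(semi3abelian_mul_conj Gw w3 Gg) conjgM.
move/mulgI/conjg_inj=> fix_wg.
by apply/commute_sym/commgP/conjg_fixP.
Qed.

Lemma semi3abelian_engel w g :
  w \in G -> w ^+ 3 = 1 -> g \in G -> [~ w, g, g] = 1.
Proof.
move=> Gw w3 Gg; have wy := semi3abelian_commute_conj Gw w3 Gg.
have y3 : (w ^ g) ^+ 3 = 1 by rewrite -conjXg w3 conj1g.
have yg : (w ^ g) ^ g = (w * w ^ g)^-1.
  by apply/esym/mulg1_eq; rewrite -conjgM semi3abelian_mul_conj.
apply/eqP/conjg_fixP; rewrite commgEl conjMg conjVg yg.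
move: (w ^ g) wy y3 => y wy y3.
have y_inv2 : y^-1 * y^-1 = y.
  by rewrite -invMg; apply: mulg1_eq; rewrite -y3 !expgS expg0 mulg1 mulgA.
by rewrite invMg mulgA y_inv2; apply/commuteV/commute_sym.
Qed.

Lemma semi3abelian_group_set_cubes : group_set [set g in G | g ^+ 3 == 1].
Proof.
apply/group_setP; split; first by rewrite inE group1 expg1n /=.
move=> x y; rewrite !inE => /andP[Gx x3] /andP[Gy y3].
by rewrite groupM //= semiG // (eqP x3) (eqP y3) mulg1.
Qed.

Lemma semi3abelian_Omega1_3E : Omega1_3 G = [set g in G | g ^+ 3 == 1].
Proof. exact: gen_set_id semi3abelian_group_set_cubes. Qed.

Variable x : gT.
Hypotheses (Gx : x \in G) (x3 : x ^+ 3 = 1).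

Lemma sub_nclass_cubes : <<x ^: G>> \subset [set g in G | g ^+ 3 == 1].
Proof.
rewrite -[[set g in G | _]]/(gval (Group semi3abelian_group_set_cubes)).
rewrite gen_subG; apply/subsetP=> _ /imsetP[g Gg ->].
by rewrite inE groupJ //= -conjXg x3 conj1g.
Qed.

Lemma abelian_nclass : abelian <<x ^: G>>.
Proof.
rewrite abelian_gen; apply/centsP=> _ /imsetP[g Gg ->] _ /imsetP[h Gh ->].
have -> : x ^ h = (x ^ g) ^ (g^-1 * h) by rewrite conjgM conjgK.
by apply: semi3abelian_commute_conj; rewrite ?groupJ ?groupM ?groupV // -conjXg x3 conj1g.
Qed.

Lemma engel_nclass w g : w \in <<x ^: G>> -> g \in G -> [~ w, g, g] = 1.
Proof.
move=> /(subsetP sub_nclass_cubes); rewrite inE => /andP[Gw /eqP w3].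
exact: semi3abelian_engel.
Qed.

End Semi3Abelian.

Theorem lemma3p3 (gT : finGroupType) (G : {group gT}) (n : nat)
    (a : 'I_n -> gT) :
  3.-group G ->
  G :=: <<[set a i | i : 'I_n]>> ->
  semi3abelian G ->
  #|G / 'Phi(G)| = (3 ^ n)%N ->
  Omega1_3 G \subset 'Z_n.+1(G) /\
  (forall (i : 'I_n) (m : nat), (0 < m)%N ->
     a i ^+ m \in Omega1_3 G -> a i ^+ m \in 'Z_n(G)).
Proof.
(* Only the number n of generators matters. *)
move=> pG genG semiG _; have nilG := pgroup_nil pG.
have engel_abelian_nclass x : x \in G -> x ^+ 3 = 1 ->
  [/\ x \in <<x ^: G>>, <<x ^: G>> \subset G, G \subset 'N(<<x ^: G>>),
      abelian <<x ^: G>>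
    & forall w g, w \in <<x ^: G>> -> g \in G -> [~ w, g, g] = 1].
  move=> Gx x3; split; rewrite ?mem_gen ?class_refl ?gen_subG ?class_subG //.
  - by rewrite norms_gen ?class_norm.
  - exact: abelian_nclass.
  - exact: engel_nclass.
rewrite (semi3abelian_Omega1_3E semiG); split.
  apply/subsetP=> x; rewrite inE => /andP[Gx /eqP x3].
  have [Nx sNG nNG abN engelN] := engel_abelian_nclass x Gx x3.
  exact: subsetP (sub_ucn_engel_abelian_normal genG nilG sNG nNG abN engelN) x Nx.
move=> i m _; rewrite inE => /andP[Gx /eqP x3].
have [Nx sNG nNG abN engelN] := engel_abelian_nclass _ Gx x3.
have x_ai : [~ a i ^+ m, a i] = 1 by apply/eqP; rewrite commg1_sym commgXg.
exact: ucn_commute_gen_elt genG nilG sNG nNG abN engelN _ _ Nx x_ai.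
Qed.
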